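(* Let $G$ be a connected finite simple graph with edge weight function $w$ and vertex weight function $w_1$, let $u$ be a vertex of $G$ and let $T=T(G,u)$ be the weighted path-tree of $G$ with respect to $u$. Then $\eta_{(w,w_1)}(G,x)$ divides $\eta_{(w,w_1)}(T,x)$.
   Context: An edge weight function $w$ assigns a nonzero complex number to each edge; a vertex weight function $w_1$ assigns a real number (possibly $0$) to each vertex; induced subgraphs carry restricted weights. For $A\subseteq E(G)$, $w(A)=\prod_{e\in A}w(e)$. $\mu_w(G,x)=\sum_{M}(-1)^{|M|}|w(M)|^2x^{n-2|M|}$ over all matchings $M$ (including empty). $\eta_{(w,w_1)}(G,x)=\sum_{S\subseteq V(G)}(-1)^{|V(G)\setminus S|}\big(\prod_{v\in V(G)\setminus S}w_1(v)\big)\mu_w(G[S],x)$ with $G[S]$ the induced subgraph; $\mu_w$ of the empty graph is $1$. The path-tree $T(G,u)$ has as vertices the paths in $G$ starting at $u$ (including the trivial path $u$); two such paths are adjacent iff one is obtained from the other by appending one vertex $y$ adjacent in $G$ to the last vertex $z$ of the shorter path; this edge gets weight $w(e_{zy})$. The trivial path $u$ gets vertex weight $w_1(u)$; a path of length at least $1$ gets weight $w_1$ of its endpoint other than $u$. *)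

From HB Require Import structures.
From mathcomp Require Import all_boot all_order all_algebra.
Set Implicit Arguments. Unset Strict Implicit. Unset Printing Implicit Defensive.
Import Order.TTheory GRing.Theory Num.Theory.
Local Open Scope ring_scope.

Section WeightedGraphs.
Variable C : numClosedFieldType.

(* A finite simple graph: vertex type T (finType), adjacency relation adj
   (assumed symmetric and irreflexive in the theorem).
   Edge weights are given by a (symmetric) function w : T -> T -> C, the
   weight of the edge {x,y} being w x y. *)

(* A matching of the induced subgraph G[S]: a set of edges, each edge {x,y}
   represented once, as the ordered pair (x,y) with rank x < rank y;
   edges lie in S and are pairwise vertex-disjoint. *)
Definition is_matching (T : finType) (adj : rel T) (S : {set T})
    (M : {set T * T}) : bool :=
  [forall p in M, [&& adj p.1 p.2, p.1 \in S, p.2 \in S &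
                      (enum_rank p.1 < enum_rank p.2)%N]] &&
  [forall p in M, forall q in M, (p != q) ==>
      [&& p.1 != q.1, p.1 != q.2, p.2 != q.1 & p.2 != q.2]].

Definition mu_w (T : finType) (adj : rel T) (w : T -> T -> C) (S : {set T})
    : {poly C} :=
  \sum_(M : {set T * T} | is_matching adj S M)
     ((-1) ^+ #|M| * \prod_(p in M) `|w p.1 p.2| ^+ 2) *:
       'X^(#|S| - (#|M|).*2).

Definition eta_poly (T : finType) (adj : rel T) (w : T -> T -> C) (w1 : T -> C)
    : {poly C} :=
  \sum_(S : {set T})
     ((-1) ^+ #|~: S| * \prod_(v in ~: S) w1 v) *: mu_w adj w S.

(* Path tree.  A path of G starting at u is u :: t with u :: t duplicate-free
   and consecutive vertices adjacent; we represent it by its tail t. *)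
Definition is_ptail (T : finType) (adj : rel T) (u : T) (t : seq T) : bool :=
  uniq (u :: t) && path adj u t.

(* list of all tails of paths starting at u (a path has at most #|T| vertices) *)
Definition ptails (T : finType) (adj : rel T) (u : T) : seq (seq T) :=
  flatten [seq map val (enum [pred s : k.-tuple T | is_ptail adj u (val s)])
          | k <- iota 0 #|T|].

Definition PT (T : finType) (adj : rel T) (u : T) : finType :=
  seq_sub (ptails adj u).

Definition pt_ext (T : finType) (adj : rel T) (u : T) (p q : PT adj u) : bool :=
  [exists y : T, ssval q == rcons (ssval p) y].

Definition pt_adj (T : finType) (adj : rel T) (u : T) : rel (PT adj u) :=
  fun p q => pt_ext p q || pt_ext q p.

Definition pt_end (T : finType) (adj : rel T) (u : T) (p : PT adj u) : T :=
  last u (ssval p).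

Definition pt_w (T : finType) (adj : rel T) (w : T -> T -> C) (u : T)
    (p q : PT adj u) : C :=
  if pt_ext p q then w (pt_end p) (pt_end q)
  else if pt_ext q p then w (pt_end q) (pt_end p) else 1.

Definition pt_w1 (T : finType) (adj : rel T) (w1 : T -> C) (u : T)
    (p : PT adj u) : C :=
  w1 (pt_end p).

End WeightedGraphs.

From HB Require Import structures.
From mathcomp Require Import all_boot all_order all_algebra.
From mathcomp Require Import ring zify.
Set Implicit Arguments. Unset Strict Implicit. Unset Printing Implicit Defensive.

(* Godsil's argument for matching polynomials carries over to eta.  The eta
   polynomial of an induced subgraph G[A] satisfies the vertex-deletion
   recurrence
     eta(A) = (x - w1 a) eta(A - a) - sum_(b ~ a) |w ab|^2 eta(A - a - b)
   and is multiplicative over unions of mutually non-adjacent vertex sets.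
   Let p be a path of G ending at v, T_p the subtree of T(G,u) of the paths
   extending p, and A a set of vertices not visited by p before v, containing
   v and with no edge to the other unvisited vertices.  The children of p are
   the extensions of p by a neighbour of v, so induction on |A| with both
   recurrences gives
     eta_G(A) * eta_T(T_p - p) = eta_T(T_p) * eta_G(A - v).
   If moreover G[A] is connected, every component of G[A - v] contains a
   neighbour of v, i.e. the end of a child q of p, and is a set of the same
   kind for q; a second induction shows eta_G(A - v) | eta_T(T_p - p), hence
   eta_G(A) | eta_T(T_p).  The trivial path u and A = V(G) give the theorem. *)

Lemma set_card_ind (U : finType) (P : {set U} -> Prop) :
  (forall A : {set U}, (forall B : {set U}, #|B| < #|A| -> P B) -> P A) ->
  forall A, P A.
Proof.
move=> IH A; have [n] := ubnP #|A|; elim: n A => // n IHn A /ltnSE leAn.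
by apply: IH => B ltBA; apply: IHn; apply: leq_trans ltBA leAn.
Qed.

Lemma eqb_setU1K (U : finType) (x : U) (A : {set U}) :
  ((x |: A) :\ x == A) = (x \notin A).
Proof.
have [xA|xA] := boolP (x \in A); last by rewrite setU1K ?eqxx.
by apply/eqP => eA; move: xA; rewrite -eA setD11.
Qed.

Section PathTree.
Variables (T : finType) (adj : rel T) (u : T).
Local Notation PT := (PT adj u).
Local Notation pt_end := (@pt_end T adj u).

Lemma mem_ptails t : (t \in ptails adj u) = is_ptail adj u t.
Proof.
apply/flattenP/idP => [[s /mapP[k _ ->] /mapP[x]]|pt].
  by rewrite mem_enum => ? ->.
have lt_t : (size t < #|T|)%N.
  case/andP: pt => uniq_t _; have := max_card (mem (u :: t)).
  by rewrite (card_uniqP uniq_t).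
exists (map val (enum [pred s : (size t).-tuple T | is_ptail adj u (val s)])).
  by apply/mapP; exists (size t) => //; rewrite mem_iota.
by apply/mapP; exists (in_tuple t) => //; rewrite mem_enum.
Qed.

Definition pt_of t (pt : is_ptail adj u t) : PT :=
  SeqSub (etrans (mem_ptails t) pt).

Lemma pt_ptail (q : PT) : is_ptail adj u (ssval q).
Proof. by rewrite -mem_ptails; exact: ssvalP. Qed.

Lemma pt_inj (p q : PT) : ssval p = ssval q -> p = q.
Proof. exact: val_inj. Qed.

Lemma ptail_catl s1 s2 : is_ptail adj u (s1 ++ s2) -> is_ptail adj u s1.
Proof.
rewrite /is_ptail -cat_cons cat_uniq cat_path.
by case/andP=> /andP[-> _] /andP[-> _].
Qed.

Lemma ptail_rcons t y : is_ptail adj u (rcons t y) =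
  [&& is_ptail adj u t, y \notin u :: t & adj (last u t) y].
Proof.
rewrite /is_ptail -rcons_cons rcons_uniq rcons_path.
by case: (uniq _); case: (y \in _); case: (path _ _ _); case: (adj _ _).
Qed.

Definition pt_subtree (p : PT) := [set q : PT | prefix (ssval p) (ssval q)].
Definition pt_children (p : PT) := [set q : PT | pt_ext p q].

Lemma pt_extP (p q : PT) :
  reflect (exists y, ssval q = rcons (ssval p) y) (pt_ext p q).
Proof. by apply: (iffP existsP) => [[y /eqP]|[y e]]; exists y => //; apply/eqP. Qed.

Lemma pt_ext_prefix (p q : PT) : pt_ext p q -> prefix (ssval p) (ssval q).
Proof. by case/pt_extP=> y ->; apply: prefix_rcons. Qed.

Lemma pt_ext_size (p q : PT) : pt_ext p q -> size (ssval q) = (size (ssval p)).+1.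
Proof. by case/pt_extP=> y ->; rewrite size_rcons. Qed.

Lemma pt_ext_asym (p q : PT) : pt_ext p q -> pt_ext q p = false.
Proof.
by move=> /pt_ext_size pq; apply/negbTE/negP => /pt_ext_size; lia.
Qed.

Lemma pt_ext_irr (p : PT) : pt_ext p p = false.
Proof. by apply/negbTE/negP => /pt_ext_size; lia. Qed.

Lemma pt_adj_sym : symmetric (@pt_adj _ adj u).
Proof. by move=> p q; rewrite /pt_adj orbC. Qed.

Lemma pt_adj_irr : irreflexive (@pt_adj _ adj u).
Proof. by move=> p; rewrite /pt_adj pt_ext_irr. Qed.

Lemma pt_subtree_refl (p : PT) : p \in pt_subtree p.
Proof. by rewrite inE prefix_refl. Qed.

Lemma pt_child_subtree (p q : PT) : q \in pt_children p -> q \in pt_subtree p.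
Proof. by rewrite !inE; apply: pt_ext_prefix. Qed.

Lemma pt_adj_subtree (p q : PT) : q \in pt_subtree p -> pt_adj p q = pt_ext p q.
Proof.
rewrite inE /pt_adj => /size_prefix le_pq.
have [/pt_ext_size qp|] := boolP (pt_ext q p); last by rewrite orbF.
by move: le_pq; rewrite qp ltnn.
Qed.

Lemma pt_childP (p q : PT) : q \in pt_children p ->
  [/\ ssval q = rcons (ssval p) (pt_end q), pt_end q \notin u :: ssval p &
      adj (pt_end p) (pt_end q)].
Proof.
rewrite inE => /pt_extP[y eq]; have := pt_ptail q.
by rewrite eq ptail_rcons => /and3P[_ ? ?]; rewrite /pt_end eq last_rcons.
Qed.

Lemma pt_child_exists (p : PT) y : y \notin u :: ssval p -> adj (pt_end p) y ->
  exists2 q, q \in pt_children p & pt_end q = y.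
Proof.
move=> fresh_y py.
have pt : is_ptail adj u (rcons (ssval p) y) by rewrite ptail_rcons pt_ptail fresh_y.
exists (pt_of pt); first by rewrite inE; apply/pt_extP; exists y.
by rewrite /pt_end /= last_rcons.
Qed.

Lemma pt_end_children_inj (p : PT) : {in pt_children p &, injective pt_end}.
Proof.
move=> i j /pt_childP[ei _ _] /pt_childP[ej _ _] eij.
by apply: pt_inj; rewrite ei ej eij.
Qed.

Lemma pt_subtree_nth (p i r : PT) : i \in pt_children p -> r \in pt_subtree i ->
  nth u (ssval r) (size (ssval p)) = pt_end i.
Proof.
move=> /pt_childP[ei _ _]; rewrite inE => /prefixP[s ->].
by rewrite ei nth_cat size_rcons ltnSn nth_rcons ltnn eqxx.
Qed.

Lemma pt_subtrees_apart (p i j r r' : PT) :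
  i \in pt_children p -> j \in pt_children p -> i != j ->
  r \in pt_subtree i -> r' \in pt_subtree j -> (r != r') && ~~ pt_adj r r'.
Proof.
move=> iC jC ij ri r'j.
have ne : pt_end i != pt_end j.
  by apply: contra ij => /eqP /(pt_end_children_inj iC jC) ->.
have ni := pt_subtree_nth iC ri; have nj := pt_subtree_nth jC r'j.
apply/andP; split; first by apply: contra ne => /eqP rr'; rewrite -ni -nj rr'.
rewrite /pt_adj negb_or; apply/andP; split; apply/negP => /pt_ext_prefix pr.
  have r'i : r' \in pt_subtree i by rewrite !inE in ri *; apply: prefix_trans pr.
  by move: ne; rewrite -(pt_subtree_nth iC r'i) nj eqxx.
have rj : r \in pt_subtree j by rewrite !inE in r'j *; apply: prefix_trans pr.
by move: ne; rewrite -ni (pt_subtree_nth jC rj) eqxx.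
Qed.

Lemma pt_subtreeD1 (p : PT) :
  pt_subtree p :\ p = \bigcup_(q in pt_children p) pt_subtree q.
Proof.
apply/setP=> r; apply/setD1P/bigcupP => [[rp]|[q qC rq]].
  rewrite inE => /prefixP[[|y s] er].
    by case/eqP: rp; apply: pt_inj; rewrite er cats0.
  have pt : is_ptail adj u (rcons (ssval p) y).
    by apply: (@ptail_catl _ s); rewrite cat_rcons -er; apply: pt_ptail.
  exists (pt_of pt); first by rewrite inE; apply/pt_extP; exists y.
  by rewrite inE /= er -cat_rcons prefix_prefix.
have pq : pt_ext p q by rewrite inE in qC.
rewrite inE in rq; split; last by rewrite inE; apply: prefix_trans (pt_ext_prefix pq) rq.
by apply/eqP=> rp; move: (pt_ext_size pq) (size_prefix rq); rewrite rp => ->; rewrite ltnn.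
Qed.

Definition pt_root : PT := @pt_of [::] isT.

Lemma pt_subtree_root : pt_subtree pt_root = setT.
Proof. by apply/setP=> q; rewrite !inE prefix0s. Qed.

End PathTree.

Section InducedConnect.
Variables (T : finType) (adj : rel T).

Definition induced (A : {set T}) : rel T :=
  fun x y => [&& adj x y, x \in A & y \in A].

Lemma connect_invariant (e e' : rel T) (P : pred T) x z :
  (forall a b, P a -> e a b -> P b && e' a b) -> P x ->
  connect e x z -> connect e' x z.
Proof.
move=> step Px /connectP[s es ->]; apply/connectP; exists s => //.
elim: s x Px es => //= y s IHs x Px /andP[exy es].
by have /andP[Py -> /=] := step x y Px exy; apply: IHs.
Qed.

Lemma connect_induced_src (B : {set T}) x z :
  connect (induced B) x z -> x = z \/ x \in B.
Proof.
case/connectP=> [[|y s]] /=; first by move=> _ ->; left.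
by case/andP=> /and3P[_ xB _] _ _; right.
Qed.

Definition component (B : {set T}) y0 := [set z in B | connect (induced B) y0 z].

Lemma component_sub (B : {set T}) y0 : component B y0 \subset B.
Proof. by apply/subsetP=> z; rewrite inE => /andP[]. Qed.

Lemma component_closed (B : {set T}) y0 a b :
  a \in component B y0 -> adj a b -> b \in B -> b \in component B y0.
Proof.
rewrite !inE => /andP[aB y0a] ab bB; rewrite bB /=.
by apply: connect_trans y0a (connect1 _); rewrite /induced /= ab aB bB.
Qed.

Lemma connect_component (B : {set T}) y0 z : y0 \in B ->
  z \in component B y0 -> connect (induced (component B y0)) y0 z.
Proof.
move=> y0B zK; have := zK; rewrite inE => /andP[_].
apply: (connect_invariant (P := [in component B y0])); last by rewrite /= inE y0B connect0.
move=> a b /= aK /and3P[ab aB bB]; have bK := component_closed aK ab bB.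
by rewrite bK /induced /= ab aK bK.
Qed.

Lemma connect_off_component (B : {set T}) y0 y z : symmetric adj ->
  z \in B -> z \notin component B y0 -> connect (induced B) y z ->
  connect (induced (B :\: component B y0)) y z.
Proof.
move=> adj_sym zB zK yz; have yK : y \notin component B y0.
  by apply: contra zK; rewrite !inE zB => /andP[_ y0y]; apply: connect_trans y0y yz.
apply: (connect_invariant (P := [predC component B y0])) yz => //.
move=> a b /= aK /and3P[ab aB bB]; have bK : b \notin component B y0.
  by apply: contra aK => bK; apply: component_closed bK _ aB; rewrite adj_sym.
by rewrite bK /induced /= ab !in_setD aK aB bK bB.
Qed.

Lemma connect_first_step (A : {set T}) v z : connect (induced A) v z -> z != v ->
  exists y, [/\ adj v y, y \in A :\ v & connect (induced (A :\ v)) y z].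
Proof.
case/connectP=> s vs ->; case: (shortenP vs) => [[|y s'] /= vs' uniq_s' _].
  by rewrite eqxx.
case/andP: vs' => /and3P[vy vA yA] ys'; case/andP: uniq_s' => v_s' _.
exists y; split => //.
  by rewrite !inE yA andbT; apply: contraNneq v_s' => ->; rewrite mem_head.
apply/connectP; exists s' => //.
apply: (sub_in_path (P := [pred a | a != v]) (e := induced A)) => //.
- move=> a b; rewrite !inE /induced /= => av bv /and3P[ab aA bA].
  by rewrite ab !in_setD1 av aA bv bA.
- by apply/allP=> a a_s /=; apply: contraNneq v_s' => av; rewrite -av.
Qed.

End InducedConnect.

Import Order.TTheory GRing.Theory Num.Theory.
Local Open Scope ring_scope.

Section Matchings.
Variables (C : numClosedFieldType) (T : finType) (adj : rel T) (w : T -> T -> C).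
Hypothesis adj_sym : symmetric adj.
Hypothesis adj_irr : irreflexive adj.
Hypothesis w_norm_sym : forall x y, `|w x y| = `|w y x|.

Definition oedge (a b : T) : T * T :=
  if (enum_rank a < enum_rank b)%N then (a, b) else (b, a).

Lemma oedge_inj a : injective (oedge a).
Proof. by move=> b b'; rewrite /oedge; do 2 case: ifP => _; case=> *; subst. Qed.

Lemma matchingP (S : {set T}) (M : {set T * T}) : reflect
  ((forall p, p \in M ->
      [/\ adj p.1 p.2, p.1 \in S, p.2 \in S & (enum_rank p.1 < enum_rank p.2)%N]) /\
   (forall p q, p \in M -> q \in M -> p != q ->
      [/\ p.1 != q.1, p.1 != q.2, p.2 != q.1 & p.2 != q.2]))
  (is_matching adj S M).
Proof.
apply: (iffP andP) => [[/forallP H1 /forallP H2]|[H1 H2]]; split.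
- by move=> p pM; move/implyP: (H1 p) => /(_ pM) /and4P[].
- move=> p q pM qM pq; move/implyP: (H2 p) => /(_ pM) /forallP /(_ q) /implyP /(_ qM).
  by move/implyP/(_ pq)/and4P.
- by apply/forallP=> p; apply/implyP=> /H1 [-> -> -> ->].
- apply/forallP=> p; apply/implyP=> pM; apply/forallP=> q; apply/implyP=> qM.
  by apply/implyP=> pq; have [-> -> -> ->] := H2 p q pM qM pq.
Qed.

Lemma matching_card (S : {set T}) (M : {set T * T}) :
  is_matching adj S M -> (#|M|.*2 <= #|S|)%N.
Proof.
case/matchingP=> H1 H2.
have inj1 : {in M &, injective (fun p : T * T => p.1)}.
  move=> p q pM qM e; apply/eqP; apply: contraT => pq.
  by have [/eqP] := H2 p q pM qM pq.
have inj2 : {in M &, injective (fun p : T * T => p.2)}.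
  move=> p q pM qM e; apply/eqP; apply: contraT => pq.
  by have [_ _ _ /eqP] := H2 p q pM qM pq.
have dis : [disjoint [set p.1 | p in M] & [set p.2 | p in M]].
  rewrite -setI_eq0; apply/eqP/setP=> x; rewrite !inE.
  apply/andP=> -[/imsetP[p pM ->] /imsetP[q qM e]].
  have [pq|npq] := eqVneq p q.
    by subst; have [_ _ _ ] := H1 q qM; rewrite e ltnn.
  by have [_ /eqP] := H2 p q pM qM npq.
have := subset_leq_card (_ : [set p.1 | p in M] :|: [set p.2 | p in M] \subset S).
rewrite cardsU (disjoint_setI0 dis) cards0 subn0 !card_in_imset // -addnn.
apply; apply/subsetP=> x; rewrite inE => /orP[] /imsetP[p pM ->];
  by have [] := H1 p pM.
Qed.

Lemma matching_subset (S S' : {set T}) M :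
  S \subset S' -> is_matching adj S M -> is_matching adj S' M.
Proof.
move=> sSS' /matchingP[H1 H2]; apply/matchingP; split=> // p /H1[? ? ? ?].
by split=> //; apply: (subsetP sSS').
Qed.

Lemma oedge_matching (S : {set T}) M p : is_matching adj S M -> p \in M ->
  oedge p.1 p.2 = p /\ oedge p.2 p.1 = p.
Proof.
case/matchingP=> H1 _ /H1[_ _ _ r]; rewrite /oedge r; case: ltngtP r => //.
by case: p.
Qed.

Lemma matching_oedge_mem a b (S : {set T}) M : is_matching adj S M ->
  oedge a b \in M -> [/\ b \in S, a \in S & adj a b].
Proof.
case/matchingP=> H1 _ /H1; rewrite /oedge; case: ifP => _ /= [? ? ? _]; split=> //.
by rewrite adj_sym.
Qed.

Lemma matching_partner_uniq a b b' (S : {set T}) M : is_matching adj S M ->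
  oedge a b \in M -> oedge a b' \in M -> b = b'.
Proof.
case/matchingP=> _ H2 h h'; apply: (@oedge_inj a); apply/eqP; apply: contraT => ne.
have [] := H2 _ _ h h' ne; move: h h' ne.
by rewrite /oedge; do 2 case: ifP => _ /=; rewrite ?eqxx.
Qed.

Definition covers a (M : {set T * T}) := [exists b, oedge a b \in M].

Lemma matching_uncovered a (S : {set T}) M : a \in S ->
  (is_matching adj S M && ~~ covers a M) = is_matching adj (S :\ a) M.
Proof.
move=> aS; apply/idP/idP.
- case/andP=> m ncov; have [H1 H2] := matchingP _ _ m.
  apply/matchingP; split=> // p pM; have [? h2 h3 ?] := H1 p pM.
  have [e1 e2] := oedge_matching m pM.
  split=> //; rewrite !inE ?h2 ?h3 andbT; apply: contraNneq ncov => ea;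
    apply/existsP; [exists p.2 | exists p.1]; by rewrite -ea ?e1 ?e2.
- move=> m; rewrite (matching_subset (subsetDl _ _) m) /=.
  apply/negP=> /existsP[b]; rewrite /oedge; case: ifP => _ eM;
  have [H1 _] := matchingP _ _ m; have [_] := H1 _ eM; rewrite /= !inE eqxx //;
  by rewrite andbF.
Qed.

Lemma matching_setU1 a b (S : {set T}) M : a \in S -> b \in S -> adj a b ->
  (is_matching adj S (oedge a b |: M) && (oedge a b \notin M)) =
  is_matching adj (S :\ a :\ b) M.
Proof.
move=> aS bS ab; apply/idP/idP.
- case/andP=> /matchingP[H1 H2] neM; apply/matchingP; split.
  + move=> p pM; have pM' : p \in oedge a b |: M by rewrite inE pM orbT.
    have [? h2 h3 ?] := H1 p pM'.
    have pe : p != oedge a b by apply: contraNneq neM => <-.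
    have [] := H2 p _ pM' (setU11 _ _) pe.
    rewrite /oedge; case: ifP => _ /= d1 d2 d3 d4; split=> //; rewrite !inE ?h2 ?h3 andbT;
    by rewrite ?d1 ?d2 ?d3 ?d4 // eq_sym ?d1 ?d2 ?d3 ?d4.
  + by move=> p q pM qM; apply: H2; rewrite inE ?pM ?qM orbT.
- move=> m; have [H1 H2] := matchingP _ _ m; apply/andP; split; last first.
    apply/negP=> /H1 []; rewrite /oedge; case: ifP => _ /= _; rewrite !inE eqxx //.
    by rewrite andbF.
  apply/matchingP; split.
  + move=> p; rewrite !inE => /orP[/eqP ->|pM]; last first.
      have sS : S :\ a :\ b \subset S by apply: subset_trans (subsetDl _ _) (subsetDl _ _).
      by have [? ? ? ?] := H1 p pM; split=> //; apply: (subsetP sS).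
    rewrite /oedge; case: ifP => r /=; split=> //; rewrite 1?adj_sym // ?ltnNge ?r //=.
    have ne_ab : enum_rank a != enum_rank b.
      by rewrite (inj_eq enum_rank_inj); apply: contraTneq ab => ->; rewrite adj_irr.
    by rewrite leq_eqVlt r orbF.
  + move=> p q; rewrite !inE => /orP[/eqP ->|pM] /orP[/eqP ->|qM]; rewrite ?eqxx // => pq.
    * have [_ h2 h3 _] := H1 q qM; move: h2 h3; rewrite !inE.
      case/and3P=> q1b q1a _ /and3P[q2b q2a _].
      by rewrite /oedge; case: ifP => _ /=;
        rewrite !(eq_sym _ q.1) !(eq_sym _ q.2) ?q1a ?q1b ?q2a ?q2b.
    * have [_ h2 h3 _] := H1 p pM; move: h2 h3; rewrite !inE.
      case/and3P=> q1b q1a _ /and3P[q2b q2a _].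
      by rewrite /oedge; case: ifP => _ /=; rewrite ?q1a ?q1b ?q2a ?q2b.
    * exact: H2.
Qed.

Definition mu_term (S : {set T}) (M : {set T * T}) : {poly C} :=
  ((-1) ^+ #|M| * \prod_(p in M) `|w p.1 p.2| ^+ 2) *: 'X^(#|S| - (#|M|).*2).

Lemma sum_matching_covers a (S : {set T}) :
  \sum_(M | is_matching adj S M && covers a M) mu_term S M =
  \sum_(b in S | adj a b) \sum_(M | is_matching adj S M && (oedge a b \in M)) mu_term S M.
Proof.
rewrite big_mkcond /=.
under [RHS]eq_bigr do rewrite big_mkcond /=.
rewrite exchange_big /=; apply: eq_bigr => M _.
case m: (is_matching adj S M) => /=; last by rewrite big1.
case: ifPn => [/existsP[b0 h0]|nc]; last first.
  by rewrite big1 // => b _; case: ifP => // h; case/negP: nc; apply/existsP; exists b.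
have [b0S _ ab0] := matching_oedge_mem m h0.
rewrite (bigD1 b0) /=; last by rewrite b0S ab0.
rewrite h0 big1 ?addr0 // => b /andP[_ nb]; case: ifP => // h.
by case/eqP: nb; apply: (matching_partner_uniq m h h0).
Qed.

Lemma sum_matching_oedge a b (S : {set T}) : a \in S -> b \in S -> adj a b ->
  \sum_(M | is_matching adj S M && (oedge a b \in M)) mu_term S M =
  - (`|w a b| ^+ 2 *: mu_w adj w (S :\ a :\ b)).
Proof.
move=> aS bS ab; have nab : a != b by apply: contraTneq ab => ->; rewrite adj_irr.
rewrite (reindex_onto (fun M' => oedge a b |: M') (fun M => M :\ oedge a b)) /=; last first.
  by move=> M /andP[_ h]; rewrite setD1K.
rewrite (eq_bigl (fun M => is_matching adj (S :\ a :\ b) M)); last first.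
  by move=> M; rewrite setU11 andbT eqb_setU1K matching_setU1.
rewrite /mu_w scaler_sumr -sumrN; apply: eq_bigr => M m.
have ne : oedge a b \notin M.
  by have := m; rewrite -(matching_setU1 _ aS bS ab) => /andP[].
rewrite /mu_term cardsU1 ne big_setU1 //= scalerA -scaleNr; congr (_ *: 'X^_).
  have -> : `|w (oedge a b).1 (oedge a b).2| = `|w a b|.
    by rewrite /oedge; case: ifP => //= _; rewrite w_norm_sym.
  by rewrite add1n exprS; ring.
rewrite (cardsD1 a S) aS (cardsD1 b (S :\ a)) !inE eq_sym nab bS /=.
by rewrite add1n doubleS subSS.
Qed.

Lemma mu_w_rec a (S : {set T}) : a \in S ->
  mu_w adj w S = 'X * mu_w adj w (S :\ a)
     - \sum_(b in S | adj a b) `|w a b| ^+ 2 *: mu_w adj w (S :\ a :\ b).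
Proof.
move=> aS; rewrite {1}/mu_w -/(mu_term S) (bigID (covers a)) /= addrC; congr (_ + _).
  rewrite (eq_bigl (fun M => is_matching adj (S :\ a) M)); last first.
    by move=> M; rewrite matching_uncovered.
  rewrite /mu_w mulr_sumr; apply: eq_bigr => M m.
  by rewrite /mu_term (cardsD1 a S) aS subSn ?matching_card // exprS scalerAr.
rewrite sum_matching_covers -sumrN; apply: eq_bigr => b /andP[bS ab].
exact: sum_matching_oedge.
Qed.

Lemma mu_w0 : mu_w adj w set0 = 1.
Proof.
rewrite /mu_w (big_pred1 set0) ?cards0 ?big_set0 ?expr0 ?mul1r ?scale1r //.
move=> M; apply/idP/eqP => [/matchingP[H1 _]|->].
  by apply/setP=> p; rewrite inE; apply/negP=> /H1[_]; rewrite inE.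
by apply/matchingP; split=> p; rewrite inE.
Qed.

End Matchings.
Lemma sum_subsetD1 (U : finType) (V : nmodType) (F : {set U} -> V)
    (x : U) (A : {set U}) : x \in A ->
  \sum_(S : {set U} | S \subset A) F S =
    \sum_(S : {set U} | S \subset A :\ x) F S
    + \sum_(S : {set U} | S \subset A :\ x) F (x |: S).
Proof.
move=> xA; rewrite (bigID (fun S : {set U} => x \in S)) /= addrC; congr (_ + _).
  by apply: eq_bigl => S; rewrite subsetD1.
rewrite (reindex_onto (fun S => x |: S) (fun S => S :\ x)) /=; last first.
  by move=> S /andP[_ xS]; rewrite setD1K.
apply: eq_bigl => S; rewrite setU11 andbT eqb_setU1K subUset sub1set xA /=.
by rewrite subsetD1.
Qed.

Section EtaInduced.
Variables (C : numClosedFieldType) (T : finType) (adj : rel T).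
Variables (w : T -> T -> C) (w1 : T -> C).
Hypothesis adj_sym : symmetric adj.
Hypothesis adj_irr : irreflexive adj.
Hypothesis w_norm_sym : forall x y, `|w x y| = `|w y x|.

Local Notation mu := (mu_w adj w).

Definition eta_coef (A S : {set T}) : C :=
  (-1) ^+ #|A :\: S| * \prod_(v in A :\: S) w1 v.

Definition eta_on (A : {set T}) : {poly C} :=
  \sum_(S : {set T} | S \subset A) eta_coef A S *: mu S.

Lemma eta_on_setT : eta_on setT = eta_poly adj w w1.
Proof.
rewrite /eta_on /eta_poly; apply: eq_big => [S|S _]; first by rewrite subsetT.
by rewrite /eta_coef setTD.
Qed.

Lemma eta_on0 : eta_on set0 = 1.
Proof.
rewrite /eta_on (big_pred1 set0); last by move=> S; rewrite subset0.
by rewrite mu_w0 /eta_coef setD0 cards0 big_set0 expr0 mulr1 scale1r.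
Qed.

Lemma eta_coefD1 x (A S : {set T}) : x \in A -> x \notin S ->
  eta_coef A S = - w1 x * eta_coef (A :\ x) S.
Proof.
move=> xA xS; have eAS : A :\: S = x |: ((A :\ x) :\: S).
  by apply/setP=> y; rewrite !inE; case: eqVneq => [->|] //=; rewrite xS xA.
have x_new : x \notin (A :\ x) :\: S by rewrite !inE eqxx andbF.
by rewrite /eta_coef eAS cardsU1 x_new big_setU1 //= add1n exprS; ring.
Qed.

Lemma eta_coefU1 x (A S : {set T}) : eta_coef A (x |: S) = eta_coef (A :\ x) S.
Proof. by rewrite /eta_coef -setDDl. Qed.

Lemma sum_eta_coef_delete (P : pred T) (c : T -> C) (B : {set T}) :
  \sum_(S : {set T} | S \subset B) eta_coef B S *: \sum_(b in S | P b) c b *: mu (S :\ b)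
  = \sum_(b in B | P b) c b *: eta_on (B :\ b).
Proof.
under eq_bigr do rewrite scaler_sumr big_mkcond /=.
rewrite exchange_big /= [RHS]big_mkcond /=; apply: eq_bigr => b _.
have [_|_] := boolP (P b); last by rewrite andbF big1 // => S _; rewrite andbF.
under eq_bigr do rewrite andbT; rewrite andbT.
have [bB|bB] := boolP (b \in B); last first.
  rewrite big1 // => S sSB; case: ifP => // bS; case/negP: bB.
  exact: (subsetP sSB).
rewrite (sum_subsetD1 _ bB) big1 ?add0r; last first.
  by move=> S; rewrite subsetD1 => /andP[_ /negbTE ->].
rewrite /eta_on scaler_sumr; apply: eq_bigr => S; rewrite subsetD1 => /andP[_ bS].
by rewrite setU11 eta_coefU1 setU1K // !scalerA mulrC.
Qed.

Lemma eta_on_rec a (A : {set T}) : a \in A ->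
  eta_on A = ('X - (w1 a)%:P) * eta_on (A :\ a)
     - \sum_(b in A | adj a b) `|w a b| ^+ 2 *: eta_on (A :\ a :\ b).
Proof.
move=> aA; rewrite {1}/eta_on (sum_subsetD1 _ aA).
have -> : \sum_(S : {set T} | S \subset A :\ a) eta_coef A S *: mu S
          = - (w1 a)%:P * eta_on (A :\ a).
  rewrite /eta_on mulr_sumr; apply: eq_bigr => S; rewrite subsetD1 => /andP[_ aS].
  by rewrite (eta_coefD1 aA aS) -scalerA -polyCN mul_polyC.
have -> : \sum_(S : {set T} | S \subset A :\ a) eta_coef A (a |: S) *: mu (a |: S)
   = 'X * eta_on (A :\ a) - \sum_(S : {set T} | S \subset A :\ a)
       eta_coef (A :\ a) S *: \sum_(b in S | adj a b) `|w a b| ^+ 2 *: mu (S :\ b).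
  rewrite /eta_on mulr_sumr -sumrB; apply: eq_bigr => S.
  rewrite subsetD1 => /andP[_ aS].
  rewrite eta_coefU1 (mu_w_rec adj_sym adj_irr w_norm_sym (setU11 a S)) setU1K //.
  rewrite scalerBr scalerAr; congr (_ - _ *: _); apply: eq_big => [b|b _] //.
  by rewrite !inE; case: eqVneq => //= ->; rewrite adj_irr andbF.
rewrite sum_eta_coef_delete addrA -mulrDl [- _ + 'X]addrC.
congr (_ - _); apply: eq_bigl => b; rewrite !inE.
by case: eqVneq => //= ->; rewrite adj_irr andbF.
Qed.

Lemma eta_on_monic_size (A : {set T}) : eta_on A \is monic /\ size (eta_on A) = #|A|.+1.
Proof.
elim/set_card_ind: A => A IH; have [->|[a aA]] := set_0Vmem A.
  by rewrite eta_on0 cards0 monic1 size_poly1.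
have ltA1 : (#|A :\ a| < #|A|)%N := proper_card (properD1 aA).
have [monic1 size1] := IH _ ltA1.
have cardA : #|A| = #|A :\ a|.+1 by rewrite (cardsD1 a A) aA.
have monic_lead : ('X - (w1 a)%:P) * eta_on (A :\ a) \is monic.
  by rewrite monicMl ?monicXsubC.
have size_lead : size (('X - (w1 a)%:P) * eta_on (A :\ a)) = #|A|.+1.
  by rewrite size_monicM ?monicXsubC ?monic_neq0 // size_XsubC size1 cardA.
have size_rest : (size (\sum_(b in A | adj a b) `|w a b| ^+ 2 *: eta_on (A :\ a :\ b))%R
                 <= #|A :\ a|)%N.
  apply: (big_ind (fun p : {poly C} => size p <= #|A :\ a|)%N).
  - by rewrite size_poly0.
  - by move=> p q hp hq; apply: leq_trans (size_polyD _ _) _; rewrite geq_max hp hq.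
  move=> b /andP[bA ab]; apply: leq_trans (size_scale_leq _ _) _.
  have bA' : b \in A :\ a.
    by rewrite !inE bA andbT; apply: contraTneq ab => ->; rewrite adj_irr.
  have ltA2 := proper_card (properD1 bA').
  have [_ ->] := IH _ (ltn_trans ltA2 ltA1).
  exact: ltA2.
have lt_rest : (size (- \sum_(b in A | adj a b) `|w a b| ^+ 2 *: eta_on (A :\ a :\ b))%R
               < size (('X - (w1 a)%:P) * eta_on (A :\ a))%R)%N.
  by rewrite size_polyN size_lead cardA ltnS ltnW // ltnS.
rewrite (eta_on_rec aA); split; first by rewrite monicE lead_coefDl // (eqP monic_lead).
by rewrite size_polyDl // size_lead.
Qed.

Lemma eta_on_neq0 (A : {set T}) : eta_on A != 0.
Proof. by have [monicA _] := eta_on_monic_size A; apply: monic_neq0. Qed.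

Lemma eta_onU (A B : {set T}) : [disjoint A & B] ->
  {in A & B, forall x y, ~~ adj x y} -> eta_on (A :|: B) = eta_on A * eta_on B.
Proof.
elim/set_card_ind: A => A IH dAB nAB; have [->|[a aA]] := set_0Vmem A.
  by rewrite set0U eta_on0 mul1r.
have notinB x : x \in A -> x \notin B by move/(disjointFr dAB)->.
have D1U x (A' : {set T}) : x \in A -> (A' :|: B) :\ x = (A' :\ x) :|: B.
  move=> xA; apply/setP=> y; rewrite !inE.
  by case: eqVneq => [->|] //=; rewrite (negbTE (notinB x xA)).
have IHD (A' : {set T}) : A' \proper A -> eta_on (A' :|: B) = eta_on A' * eta_on B.
  move=> ltA'; have sA' := proper_sub ltA'; apply: IH (proper_card ltA') _ _.
  - exact: disjointWl sA' dAB.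
  - by move=> x y xA' yB; apply: nAB (subsetP sA' x xA') yB.
have aAB : a \in A :|: B by rewrite inE aA.
rewrite (eta_on_rec aAB) D1U // IHD ?properD1 // (eta_on_rec aA) [RHS]mulrBl -mulrA.
congr (_ - _); rewrite mulr_suml.
rewrite (eq_bigl (fun b => (b \in A) && adj a b)); last first.
  move=> b; rewrite inE; have [bA|] //= := boolP (b \in A).
  by have [bB|] //= := boolP (b \in B); rewrite (negbTE (nAB _ _ aA bB)).
apply: eq_bigr => b /andP[bA ab].
have bAa : b \in A :\ a.
  by rewrite !inE bA andbT; apply: contraTneq ab => ->; rewrite adj_irr.
rewrite D1U // IHD ?scalerAl //.
exact: sub_proper_trans (subsetDl _ _) (properD1 aA).
Qed.

Lemma eta_on_bigcup (I : finType) (J : {set I}) (B : I -> {set T}) :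
  {in J &, forall i j, i != j ->
     [disjoint B i & B j] /\ {in B i & B j, forall x y, ~~ adj x y}} ->
  eta_on (\bigcup_(i in J) B i) = \prod_(i in J) eta_on (B i).
Proof.
elim/set_card_ind: J => J IH apart; have [->|[i iJ]] := set_0Vmem J.
  by rewrite !big_set0 eta_on0.
rewrite (big_setD1 _ iJ) (big_setD1 _ iJ) /= eta_onU ?IH ?proper_card ?properD1 //.
- by move=> k j /setD1P[_ kJ] /setD1P[_ jJ]; apply: apart.
- apply: bigcup_disjoint => j /setD1P[ji jJ].
  have ij : i != j by rewrite eq_sym.
  by have [] := apart i j iJ jJ ij.
- move=> x y xi /bigcupP[j /setD1P[ji jJ] yj].
  have ij : i != j by rewrite eq_sym.
  by have [_] := apart i j iJ jJ ij; apply.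
Qed.

End EtaInduced.

Section PathTreeDivisibility.
Variables (C : numClosedFieldType) (T : finType) (adj : rel T).
Variables (w : T -> T -> C) (w1 : T -> C) (u : T).
Hypothesis adj_sym : symmetric adj.
Hypothesis adj_irr : irreflexive adj.
Hypothesis w_sym : forall x y, w x y = w y x.

Local Notation PT := (PT adj u).
Local Notation pt_end := (@pt_end T adj u).
Local Notation pt_w := (@pt_w C T adj w u).
Local Notation etaG := (eta_on adj w w1).
Local Notation etaT := (eta_on (@pt_adj T adj u) pt_w (@pt_w1 C T adj w1 u)).

Lemma w_norm_sym x y : `|w x y| = `|w y x|.
Proof. by rewrite w_sym. Qed.

Lemma pt_w_norm_sym (p q : PT) : `|pt_w p q| = `|pt_w q p|.
Proof.
rewrite /pt_w; have [pq|] := boolP (pt_ext p q); first by rewrite pt_ext_asym.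
by case: (pt_ext q p).
Qed.

Lemma pt_w_child (p q : PT) : q \in pt_children p -> pt_w p q = w (pt_end p) (pt_end q).
Proof. by rewrite inE /pt_w => ->. Qed.

Local Notation etaT_rec := (eta_on_rec (@pt_w1 C T adj w1 u) (@pt_adj_sym _ adj u)
  (@pt_adj_irr _ adj u) pt_w_norm_sym).
Local Notation etaT_bigcup := (eta_on_bigcup (@pt_w1 C T adj w1 u) (@pt_adj_sym _ adj u)
  (@pt_adj_irr _ adj u) pt_w_norm_sym).

Definition unvisited (p : PT) : {set T} := ~: [set z in belast u (ssval p)].

Definition no_edge_leaving (A X : {set T}) :=
  forall z y, z \in A -> y \in X -> y \notin A -> ~~ adj z y.

Lemma mem_unvisitedD1 (p : PT) y :
  (y \in unvisited p :\ pt_end p) = (y \notin u :: ssval p).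
Proof. by rewrite /pt_end (lastI u (ssval p)) mem_rcons !inE negb_or. Qed.

Lemma unvisited_child (p q : PT) : q \in pt_children p ->
  unvisited q = unvisited p :\ pt_end p.
Proof.
move=> /pt_childP[eq _ _]; apply/setP => y.
by rewrite mem_unvisitedD1 !inE eq belast_rcons.
Qed.

Lemma neighbours_end (p : PT) (A : {set T}) : A \subset unvisited p ->
  no_edge_leaving A (unvisited p) -> pt_end p \in A ->
  [set y in A | adj (pt_end p) y] = pt_end @: pt_children p.
Proof.
move=> sA cA vA; apply/setP=> y; rewrite inE; apply/andP/imsetP.
  case=> yA vy; have yv : y != pt_end p by apply: contraTneq vy => ->; rewrite adj_irr.
  have : y \in unvisited p :\ pt_end p by rewrite in_setD1 yv (subsetP sA y yA).
  rewrite mem_unvisitedD1 => fresh_y; have [q qC <-] := pt_child_exists fresh_y vy.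
  by exists q.
case=> q /pt_childP[_ fresh_q vq] ->; split=> //.
apply: contraTT vq => qA; apply: cA vA _ qA.
by move: fresh_q; rewrite -mem_unvisitedD1 => /setD1P[].
Qed.

Lemma etaT_subtreeD1 (p : PT) :
  etaT (pt_subtree p :\ p) = \prod_(q in pt_children p) etaT (pt_subtree q).
Proof.
rewrite pt_subtreeD1 etaT_bigcup // => i j iC jC ij; split.
  apply/pred0P=> r /=; apply/negP=> /andP[ri rj].
  by have /andP[/eqP []] := pt_subtrees_apart iC jC ij ri rj.
by move=> x y xi yj; have /andP[_] := pt_subtrees_apart iC jC ij xi yj.
Qed.

Lemma etaT_subtreeD2 (p q : PT) : q \in pt_children p ->
  etaT (pt_subtree p :\ p :\ q) =
  etaT (pt_subtree q :\ q) * \prod_(i in pt_children p :\ q) etaT (pt_subtree i).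
Proof.
move=> qC; pose B (i : PT) := if i == q then pt_subtree q :\ q else pt_subtree i.
have subB i : B i \subset pt_subtree i.
  by rewrite /B; case: eqP => [->|_]; [exact: subsetDl | exact: subxx].
have -> : pt_subtree p :\ p :\ q = \bigcup_(i in pt_children p) B i.
  apply/setP=> r; rewrite in_setD1 pt_subtreeD1; apply/andP/bigcupP.
    case=> rq /bigcupP[i iC ri]; exists i => //; rewrite /B.
    by case: eqP => [e|_] //; rewrite in_setD1 rq -e.
  case=> i iC; rewrite /B; case: eqVneq => [_|iq] ri.
    by move: ri; rewrite in_setD1 => /andP[-> rq]; split=> //; apply/bigcupP; exists q.
  split; last by apply/bigcupP; exists i.
  apply/eqP=> rq; rewrite rq in ri.
  by have /andP[/eqP []] := pt_subtrees_apart iC qC iq ri (pt_subtree_refl q).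
rewrite etaT_bigcup; last first.
  move=> i j iC jC ij; split.
    apply/pred0P=> r /=; apply/negP=> /andP[/(subsetP (subB i)) ri /(subsetP (subB j)) rj].
    by have /andP[/eqP []] := pt_subtrees_apart iC jC ij ri rj.
  move=> x y /(subsetP (subB i)) xi /(subsetP (subB j)) yj.
  by have /andP[_] := pt_subtrees_apart iC jC ij xi yj.
rewrite (big_setD1 _ qC) /B eqxx; congr (_ * _); apply: eq_bigr => i.
by rewrite in_setD1 => /andP[/negbTE -> _].
Qed.

Lemma etaT_subtree_rec (p : PT) : etaT (pt_subtree p) =
  ('X - (w1 (pt_end p))%:P) * etaT (pt_subtree p :\ p)
  - \sum_(q in pt_children p) `|w (pt_end p) (pt_end q)| ^+ 2 *:
      etaT (pt_subtree p :\ p :\ q).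
Proof.
rewrite (etaT_rec (pt_subtree_refl p)); congr (_ - _).
apply: eq_big => [q|q /andP[qS pq]]; last by rewrite pt_w_child // inE -pt_adj_subtree.
have [qS|qS] /= := boolP (q \in pt_subtree p); first by rewrite pt_adj_subtree // inE.
by apply/esym/negbTE; apply: contra qS; apply: pt_child_subtree.
Qed.

Lemma etaG_end_rec (p : PT) (A : {set T}) : A \subset unvisited p ->
  no_edge_leaving A (unvisited p) -> pt_end p \in A ->
  etaG A = ('X - (w1 (pt_end p))%:P) * etaG (A :\ pt_end p)
  - \sum_(q in pt_children p) `|w (pt_end p) (pt_end q)| ^+ 2 *:
      etaG (A :\ pt_end p :\ pt_end q).
Proof.
move=> sA cA vA; rewrite (eta_on_rec w1 adj_sym adj_irr w_norm_sym vA); congr (_ - _).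
rewrite (eq_bigl [in pt_end @: pt_children p]); last first.
  by move=> y /=; rewrite -(neighbours_end sA cA vA) !inE.
by rewrite big_imset //=; exact: pt_end_children_inj.
Qed.

Lemma eta_subtree_identity (p : PT) (A : {set T}) :
  A \subset unvisited p -> no_edge_leaving A (unvisited p) -> pt_end p \in A ->
  etaG A * etaT (pt_subtree p :\ p) = etaT (pt_subtree p) * etaG (A :\ pt_end p).
Proof.
elim/set_card_ind: A p => A IH p sA cA vA.
rewrite (etaG_end_rec sA cA vA) etaT_subtree_rec etaT_subtreeD1 !mulrBl.
congr (_ - _); first by ring.
rewrite !mulr_suml; apply: eq_bigr => q qC.
rewrite (etaT_subtreeD2 qC) (big_setD1 _ qC) /=.
have /setIdP[yA vy] : pt_end q \in [set y in A | adj (pt_end p) y].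
  by rewrite (neighbours_end sA cA vA) imset_f.
have yv : pt_end q != pt_end p by apply: contraTneq vy => ->; rewrite adj_irr.
have IHq : etaG (A :\ pt_end p) * etaT (pt_subtree q :\ q) =
           etaT (pt_subtree q) * etaG (A :\ pt_end p :\ pt_end q).
  apply: IH; rewrite ?proper_card ?properD1 ?(unvisited_child qC) ?setSD ?in_setD1 ?yv //.
  move=> z y /setD1P[_ zA] /setD1P[yv' yW]; rewrite in_setD1 yv' /= => yA'.
  exact: cA zA yW yA'.
rewrite -!scalerAl; congr (_ *: _).
by rewrite [RHS]mulrAC [etaT (pt_subtree q :\ q) * _]mulrC IHq; ring.
Qed.

Local Notation etaG_U := (eta_onU w1 adj_sym adj_irr w_norm_sym).

Definition rooted_set (p : PT) (A : {set T}) : Prop :=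
  [/\ A \subset unvisited p, no_edge_leaving A (unvisited p), pt_end p \in A &
      {in A, forall z, connect (induced adj A) (pt_end p) z}].

Lemma rooted_component (p q : PT) (B : {set T}) : q \in pt_children p ->
  B \subset unvisited p :\ pt_end p -> no_edge_leaving B (unvisited p :\ pt_end p) ->
  pt_end q \in B -> rooted_set q (component adj B (pt_end q)).
Proof.
move=> qC sB cB qB; set K := component adj B (pt_end q).
have KB : K \subset B := component_sub adj B (pt_end q).
rewrite /rooted_set (unvisited_child qC); split.
- exact: subset_trans KB sB.
- move=> z y zK yW yK; have [yB|yB] := boolP (y \in B); last exact: cB (subsetP KB _ zK) yW yB.
  by apply/negP => zy; case/negP: yK; apply: component_closed zK zy yB.
- by rewrite inE qB connect0.
- by move=> z zK; apply: connect_component.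
Qed.

Lemma eta_divides_children (p : PT) (Q : {set PT}) (B : {set T}) :
  Q \subset pt_children p -> B \subset unvisited p :\ pt_end p ->
  no_edge_leaving B (unvisited p :\ pt_end p) ->
  {in B, forall z, exists2 q, q \in Q & connect (induced adj B) (pt_end q) z} ->
  (forall q (K : {set T}), q \in Q -> K \subset B -> rooted_set q K ->
     etaG K %| etaT (pt_subtree q)) ->
  etaG B %| \prod_(q in Q) etaT (pt_subtree q).
Proof.
elim/set_card_ind: Q B => Q IH B sQ sB cB conB divQ.
have [Q0|[q0 q0Q]] := set_0Vmem Q.
  have -> : B = set0.
    apply/setP => z; rewrite inE; apply/negP => zB.
    by have [q] := conB z zB; rewrite Q0 inE.
  by rewrite eta_on0 dvd1p.
have q0C := subsetP sQ _ q0Q.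
have ltQ := proper_card (properD1 q0Q).
have sQ' : Q :\ q0 \subset pt_children p := subset_trans (subsetDl _ _) sQ.
have divQ' q (K : {set T}) : q \in Q :\ q0 -> K \subset B -> rooted_set q K ->
    etaG K %| etaT (pt_subtree q).
  by move=> /setD1P[_]; apply: divQ.
rewrite (big_setD1 _ q0Q) /=.
have [y0B|y0B] := boolP (pt_end q0 \in B); last first.
  apply: dvdp_mull; apply: IH => // z zB; have [q qQ c] := conB z zB.
  exists q => //; rewrite in_setD1 qQ andbT; apply: contraNneq y0B => qq0.
  by rewrite qq0 in c; case: (connect_induced_src c) => [->|].
set K := component adj B (pt_end q0).
have KB : K \subset B := component_sub adj B (pt_end q0).
rewrite -(setID B K) (setIidPr KB) etaG_U; first last.
- move=> x y xK /setDP[yB yK]; apply/negP => xy.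
  by case/negP: yK; apply: component_closed xK xy yB.
- by apply/pred0P=> z /=; rewrite in_setD; case: (z \in K).
apply: dvdp_mul; first exact: divQ q0Q KB (rooted_component q0C sB cB y0B).
apply: IH => //.
- exact: subset_trans (subsetDl _ _) sB.
- move=> z y /setDP[zB zK] yW; rewrite in_setD negb_and negbK.
  case/orP => [yK|yB]; last exact: cB zB yW yB.
  apply/negP => zy; case/negP: zK; apply: component_closed yK _ zB.
  by rewrite adj_sym.
- move=> z /setDP[zB zK]; have [q qQ c] := conB z zB.
  exists q; last exact: connect_off_component.
  rewrite in_setD1 qQ andbT; apply: contraNneq zK => qq0.
  by rewrite qq0 in c; rewrite inE zB c.
- by move=> q K' qQ /subsetDP[K'B _]; apply: divQ'.
Qed.

Lemma eta_divides_subtree (p : PT) (A : {set T}) :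
  rooted_set p A -> etaG A %| etaT (pt_subtree p).
Proof.
elim/set_card_ind: A p => A IH p [sA cA vA conA].
have div_rest : etaG (A :\ pt_end p) %| etaT (pt_subtree p :\ p).
  rewrite etaT_subtreeD1; apply: (eta_divides_children (subxx _)).
  - by rewrite setSD.
  - move=> z y /setD1P[_ zA] /setD1P[yv yW] yA'.
    by apply: cA zA yW _; apply: contra yA'; rewrite in_setD1 yv.
  - move=> z /setD1P[zv zA].
    have [y [vy yA' c]] := connect_first_step (conA z zA) zv.
    have : y \in [set y in A | adj (pt_end p) y].
      by rewrite inE vy andbT; case/setD1P: yA'.
    by rewrite (neighbours_end sA cA vA) => /imsetP[q qC yq]; exists q; rewrite yq in c.
  - move=> q K _ sK; apply: IH.
    exact: leq_ltn_trans (subset_leq_card sK) (proper_card (properD1 vA)).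
case/dvdpP: div_rest => r er.
have := eta_subtree_identity sA cA vA; rewrite er mulrA.
by move/(mulIf (eta_on_neq0 w1 adj_sym adj_irr w_norm_sym _)) <-; apply: dvdp_mulIl.
Qed.

End PathTreeDivisibility.

Theorem corollary3p3 (C : numClosedFieldType) (T : finType) (adj : rel T)
    (w : T -> T -> C) (w1 : T -> C) (u : T)
    (adj_sym : symmetric adj) (adj_irr : irreflexive adj)
    (conn : forall x y : T, connect adj x y)
    (w_sym : forall x y : T, w x y = w y x)
    (w_nz : forall x y : T, adj x y -> w x y != 0)
    (w1_real : forall v : T, w1 v \is Num.real) :
  eta_poly adj w w1 %| eta_poly (@pt_adj T adj u) (@pt_w C T adj w u) (@pt_w1 C T adj w1 u).
Proof.
rewrite -!eta_on_setT -(pt_subtree_root adj u).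
apply: (eta_divides_subtree w1 adj_sym adj_irr w_sym); split.
- by apply/subsetP=> z _; rewrite !inE.
- by move=> z y _ _; rewrite inE.
- by rewrite inE.
- move=> z _; rewrite (@eq_connect _ _ adj) // => x y.
  by rewrite /induced !inE !andbT.
Qed.
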